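(* Define, for real $f<1$ and real $w$, $$G_0(w,f)=(1-f)\,y\left(\tfrac12-y\right),\qquad y=1-\frac{w}{1-f}$$ (equivalently $G_0(w,f)=\frac{1-f}{\Phi(1-\frac{w}{1-f})}$ with $\Phi(x)=\frac{1}{x(\frac12-x)}$). Then $G_0$ is concave on the region $\{(w,f): f\in[0,\frac12],\ \frac{1-f}{2}\le w\le 1-f\}$; hence for every $n\ge1$ and all $w_i,f_i$ with $f_i\in[0,\frac12]$ and $\frac{1-f_i}{2}\le w_i\le 1-f_i$ ($i=1,\dots,n$), $$\frac{G_0(w_1,f_1)+\cdots+G_0(w_n,f_n)}{n}\le G_0\!\left(\frac{w_1+\cdots+w_n}{n},\frac{f_1+\cdots+f_n}{n}\right).$$ *)

From HB Require Import structures.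
From mathcomp Require Import all_boot all_order all_algebra.
From mathcomp Require Import reals.
Set Implicit Arguments. Unset Strict Implicit. Unset Printing Implicit Defensive.
Import Order.TTheory GRing.Theory Num.Theory.
Local Open Scope ring_scope.

Definition G0 {R : realType} (w f : R) : R :=
  let y := 1 - w / (1 - f) in (1 - f) * y * (2^-1 - y).

Definition region {R : realType} (w f : R) : Prop :=
  0 <= f /\ f <= 2^-1 /\ (1 - f) / 2 <= w /\ w <= 1 - f.

From HB Require Import structures.
From mathcomp Require Import all_boot all_order all_algebra.
From mathcomp Require Import reals.
From mathcomp Require Import ring lra.
Import Order.TTheory GRing.Theory Num.Theory.
Local Open Scope ring_scope.

(* In the coordinates u = 1 - f - w and s = 1 - f, G0 becomes u/2 - u^2/s: a
   linear form minus the perspective u^2/s of the square, which is jointly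
   convex and subadditive on s > 0 (the Cauchy-Schwarz inequality in Engel's
   form).  Hence G0 is concave, and since u/2 - u^2/s is also positively
   homogeneous, summing and rescaling gives the averaged inequality. *)

Section G0Concavity.
Variable R : realType.
Implicit Types (a b x y l m t u s w f : R).

Lemma sqr_div_weighted_le a b x y l m : 0 < x -> 0 < y -> 0 <= l -> 0 <= m ->
  (l * a + m * b) ^+ 2 / (l * x + m * y) <= l * (a ^+ 2 / x) + m * (b ^+ 2 / y).
Proof.
move=> x_gt0 y_gt0 l_ge0 m_ge0.
have [D0 | D_neq0] := eqVneq (l * x + m * y) 0.
  have -> : l = 0 by nra.
  have -> : m = 0 by nra.
  by rewrite !mul0r !addr0 expr0n /= mul0r.
rewrite -subr_ge0.
have -> : l * (a ^+ 2 / x) + m * (b ^+ 2 / y) - (l * a + m * b) ^+ 2 / (l * x + m * y)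
    = l * m * (a * y - b * x) ^+ 2 / (x * y * (l * x + m * y)).
  by field; rewrite D_neq0 !lt0r_neq0.
apply: divr_ge0; first exact: mulr_ge0 (mulr_ge0 l_ge0 m_ge0) (sqr_ge0 _).
have D_ge0 : 0 <= l * x + m * y by rewrite addr_ge0 // mulr_ge0 // ltW.
by rewrite !mulr_ge0 // ltW.
Qed.

Lemma sum_sqr_div_le n (a x : 'I_n.+1 -> R) : (forall i, 0 < x i) ->
  (\sum_i a i) ^+ 2 / (\sum_i x i) <= \sum_i a i ^+ 2 / x i.
Proof.
elim: n a x => [|n IHn] a x x_gt0; first by rewrite !big_ord1.
rewrite !(big_ord_recl n.+1).
have x_sum_gt0 : 0 < \sum_(i < n.+1) x (lift ord0 i).
  by rewrite big_ord_recl ltr_pwDl ?sumr_ge0 // => i _; apply: ltW.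
apply: le_trans (lerD (lexx _) (IHn _ _ (fun i => x_gt0 _))).
by have := sqr_div_weighted_le (a ord0) (\sum_(i < n.+1) a (lift ord0 i)) _ _ 1 1
  (x_gt0 ord0) x_sum_gt0 ler01 ler01; rewrite !mul1r.
Qed.

Definition G0_hom u s := u / 2 - u ^+ 2 / s.

Lemma G0E w f : f != 1 -> G0 w f = G0_hom (1 - f - w) (1 - f).
Proof. by move=> f_neq1; rewrite /G0 /G0_hom; field; rewrite subr_eq0 eq_sym. Qed.

Lemma G0_homZ c u s : c != 0 -> G0_hom (c * u) (c * s) = c * G0_hom u s.
Proof.
move=> c_neq0; rewrite /G0_hom.
have [-> | s_neq0] := eqVneq s 0; last by field; rewrite c_neq0 s_neq0.
by rewrite mulr0 !invr0 !mulr0 !subr0 mulrA.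
Qed.

Lemma G0_hom_concave u1 s1 u2 s2 t : 0 < s1 -> 0 < s2 -> 0 <= t <= 1 ->
  t * G0_hom u1 s1 + (1 - t) * G0_hom u2 s2
    <= G0_hom (t * u1 + (1 - t) * u2) (t * s1 + (1 - t) * s2).
Proof.
move=> s1_gt0 s2_gt0 /andP[t_ge0 t_le1].
have := sqr_div_weighted_le u1 u2 _ _ t (1 - t) s1_gt0 s2_gt0 t_ge0.
rewrite subr_ge0 t_le1 /G0_hom => /(_ isT); lra.
Qed.

Lemma G0_hom_sum_le n (u s : 'I_n.+1 -> R) : (forall i, 0 < s i) ->
  \sum_i G0_hom (u i) (s i) <= G0_hom (\sum_i u i) (\sum_i s i).
Proof.
move=> s_gt0; rewrite /G0_hom sumrB -mulr_suml lerD2l lerN2.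
exact: sum_sqr_div_le.
Qed.

Lemma G0_concave w1 f1 w2 f2 t : f1 < 1 -> f2 < 1 -> 0 <= t <= 1 ->
  t * G0 w1 f1 + (1 - t) * G0 w2 f2
    <= G0 (t * w1 + (1 - t) * w2) (t * f1 + (1 - t) * f2).
Proof.
move=> f1_lt1 f2_lt1 /andP[t_ge0 t_le1].
have f_lt1 : t * f1 + (1 - t) * f2 < 1.
  have [t_lt1 | t_ge1] := ltP t 1; first nra.
  by rewrite (@le_anti _ _ t 1) ?t_le1 // subrr mul0r addr0 mul1r.
rewrite !G0E ?lt_eqF //.
have := @G0_hom_concave (1 - f1 - w1) (1 - f1) (1 - f2 - w2) (1 - f2) t.
rewrite !subr_gt0 f1_lt1 f2_lt1 t_ge0 t_le1 => /(_ isT isT isT).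
congr (_ <= G0_hom _ _); ring.
Qed.

Lemma G0_mean_le n (w f : 'I_n.+1 -> R) : (forall i, f i < 1) ->
  (\sum_i G0 (w i) (f i)) / n.+1%:R
    <= G0 ((\sum_i w i) / n.+1%:R) ((\sum_i f i) / n.+1%:R).
Proof.
move=> f_lt1; set N := n.+1%:R; set W := \sum_i w i; set F := \sum_i f i.
have N_gt0 : 0 < N by rewrite ltr0n.
have s_gt0 i : 0 < 1 - f i by rewrite subr_gt0.
have sum1 : \sum_(i < n.+1) (1 : R) = N by rewrite sumr_const card_ord.
have S_gt0 : 0 < N - F.
  rewrite -sum1 -sumrB big_ord_recl ltr_pwDl ?sumr_ge0 // => i _.
  exact: ltW.
rewrite (eq_bigr _ (fun i _ => G0E (w i) (f i) (negbT (lt_eqF (f_lt1 i))))).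
apply: le_trans (_ : G0_hom (N - F - W) (N - F) / N <= _).
  rewrite ler_pM2r ?invr_gt0 // -sum1 -!sumrB.
  exact: G0_hom_sum_le.
have F_mean_neq1 : F / N != 1.
  by rewrite lt_eqF // ltr_pdivrMr // mul1r -subr_gt0.
rewrite G0E // mulrC -G0_homZ ?invr_neq0 ?lt0r_neq0 //.
by rewrite !mulrBr mulVf ?lt0r_neq0 // ![N^-1 * _]mulrC.
Qed.

End G0Concavity.

Theorem lemma17 (R : realType) :
  (* concavity of G0 on the region *)
  (forall (w1 f1 w2 f2 t : R),
      region w1 f1 -> region w2 f2 -> 0 <= t -> t <= 1 ->
      t * G0 w1 f1 + (1 - t) * G0 w2 f2
        <= G0 (t * w1 + (1 - t) * w2) (t * f1 + (1 - t) * f2))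
  /\
  (* Jensen-type consequence *)
  (forall (n : nat) (w f : 'I_n -> R), (1 <= n)%N ->
      (forall i, region (w i) (f i)) ->
      (\sum_(i < n) G0 (w i) (f i)) / n%:R
        <= G0 ((\sum_(i < n) w i) / n%:R) ((\sum_(i < n) f i) / n%:R)).
Proof.
have region_f_lt1 (w f : R) : region w f -> f < 1.
  by case=> _ [f_le_half _]; apply: le_lt_trans f_le_half _; rewrite invf_lt1 ?ltr1n.
split=> [w1 f1 w2 f2 t /region_f_lt1 f1_lt1 /region_f_lt1 f2_lt1 t_ge0 t_le1 | ].
  by apply: G0_concave; rewrite ?t_ge0.
case=> [// | n] w f _ w_f_region.
by apply: G0_mean_le => i; apply: region_f_lt1 (w_f_region i).
Qed.
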